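(* Let $f:\mathbb R^n\to\mathbb R$ be convex, differentiable and $L$-Lipschitz smooth, let $g:\mathbb R^n\to\mathbb R\cup\{+\infty\}$ be proper, closed and convex, and let $F=f+g$. Let $\epsilon\ge0$, $B\ge0$, $\rho\ge0$, $x\in\mathbb R^n$, and let $\tilde x$ satisfy $\mathbf 0\in\nabla f(x)-(B+\rho)(x-\tilde x)+\partial_\epsilon g(\tilde x)$ (i.e. $\tilde x\approx_\epsilon T_{B+\rho}(x)$) together with the line search condition $D_f(\tilde x,x)\le\frac B2\|x-\tilde x\|^2$. Then for all $z\in\mathbb R^n$, $$-\epsilon\le F(z)-F(\tilde x)+\frac{B+\rho}{2}\|x-z\|^2-\frac{B+\rho}{2}\|z-\tilde x\|^2-\frac\rho2\|\tilde x-x\|^2.$$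
   Context: $D_f(u,w):=f(u)-f(w)-\langle\nabla f(w),u-w\rangle$ (Bregman divergence). $f$ is $L$-Lipschitz smooth means $D_f(u,w)\le\frac L2\|u-w\|^2$ for all $u,w$. For proper $h$ and $\epsilon\ge0$, $\partial_\epsilon h(\bar x)=\{v:\langle v,u-\bar x\rangle\le h(u)-h(\bar x)+\epsilon\ \forall u\in\mathbb R^n\}$ if $\bar x\in\operatorname{dom}h$, and $\emptyset$ otherwise. *)

(* R : realType, R^n rendered as row vectors 'rV[R]_n. *)
From HB Require Import structures.
From mathcomp Require Import all_boot all_order all_algebra.
From mathcomp Require Import all_classical all_reals all_analysis.
Set Implicit Arguments. Unset Strict Implicit. Unset Printing Implicit Defensive.
Import Order.TTheory GRing.Theory Num.Theory.
Import numFieldNormedType.Exports.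
Local Open Scope ring_scope.

Section Defs.
Context {R : realType} {n : nat}.

Definition inner (u v : 'rV[R]_n) : R := \sum_(i < n) u 0 i * v 0 i.
Definition sqnorm (u : 'rV[R]_n) : R := inner u u.

Definition is_gradient (f : 'rV[R]_n -> R) (df : 'rV[R]_n -> 'rV[R]_n) : Prop :=
  forall w, differentiable f w /\ forall h, 'd f w h = inner (df w) h.

Definition convex_fun (f : 'rV[R]_n -> R) : Prop :=
  forall x y (t : R), 0 <= t <= 1 ->
    f (t *: x + (1 - t) *: y) <= t * f x + (1 - t) * f y.

Definition bregman (f : 'rV[R]_n -> R) (df : 'rV[R]_n -> 'rV[R]_n) (u w : 'rV[R]_n) : R :=
  f u - f w - inner (df w) (u - w).

Definition lipschitz_smooth (f : 'rV[R]_n -> R) (df : 'rV[R]_n -> 'rV[R]_n) (L : R) : Prop :=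
  forall u w, bregman f df u w <= L / 2 * sqnorm (u - w).

Definition proper_fun (g : 'rV[R]_n -> \bar R) : Prop :=
  (exists x, g x < +oo)%E /\ (forall x, -oo < g x)%E.

(* closed = lower semicontinuous *)
Definition closed_fun (g : 'rV[R]_n -> \bar R) : Prop :=
  forall x (a : R), (a%:E < g x)%E -> \forall y \near x, (a%:E < g y)%E.

Definition convex_efun (g : 'rV[R]_n -> \bar R) : Prop :=
  forall (x y : 'rV[R]_n) (t : R), 0 < t < 1 ->
    (g (t *: x + (1 - t) *: y)%R <= t%:E * g x + (1 - t)%:E * g y)%E.

Definition eps_subdiff (g : 'rV[R]_n -> \bar R) (eps : R) (xb : 'rV[R]_n) : set 'rV[R]_n :=
  [set v | (g xb < +oo)%E /\
     forall u, ((inner v (u - xb)%R)%:E <= g u - g xb + eps%:E)%E].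

End Defs.

(** Write [c = B + rho] and [v = c (x - xt) - df x], the epsilon-subgradient of
    [g] at [xt].  Convexity of [f] at [x] and the line-search condition give
    [f z - f xt >= <df x, z - xt> - B/2 |x - xt|^2], while [v] gives
    [g z - g xt + eps >= c <x - xt, z - xt> - <df x, z - xt>].  Adding them, the
    gradient terms cancel, and the three-point identity
    [2 <x - xt, z - xt> = |x - xt|^2 + |z - xt|^2 - |x - z|^2] turns the
    remaining inner product into the squared distances of the claim. *)

From HB Require Import structures.
From mathcomp Require Import all_boot all_order all_algebra.
From mathcomp Require Import all_classical all_reals all_analysis.
From mathcomp Require Import lra.
Set Implicit Arguments.
Unset Strict Implicit.
Unset Printing Implicit Defensive.
Import Order.TTheory GRing.Theory Num.Theory.
Import numFieldNormedType.Exports.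
Local Open Scope ring_scope.
Local Open Scope classical_set_scope.

Section ConvexDerivative.
Context {R : realType} {V : normedModType R}.

Lemma convex_derive_le (f : V -> R) (x y : V) :
  (forall t, 0 < t < 1 -> f (t *: y + (1 - t) *: x) <= t * f y + (1 - t) * f x) ->
  derivable f x (y - x) -> 'D_(y - x) f x <= f y - f x.
Proof.
move=> cvxf dfx; set d := y - x.
pose q h := h^-1 *: ((f \o shift x) (h *: d) - f x).
have q_cvg : q h @[h --> 0^'+] --> 'D_d f x.
  have q_dcvg : q h @[h --> 0^'] --> 'D_d f x by exact: dfx.
  apply: cvg_trans q_dcvg => A [e e0 eA].
  by exists e => // h /= he h0; apply: eA => //; rewrite gt_eqF.
apply: (cvgr_to_le q_cvg); near=> h.
have h0 : 0 < h by near: h; exact: nbhs_right_gt.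
have h1 : h < 1 by near: h; exact: nbhs_right_lt.
have := cvxf h; rewrite h0 h1 => /(_ isT).
have -> : h *: y + (1 - h) *: x = h *: d + x.
  by rewrite /d scalerBr scalerBl scale1r addrCA addrC.
rewrite /q /= ler_pdivrMl //; lra.
Unshelve. all: by end_near. Qed.

End ConvexDerivative.

Section EuclideanSpace.
Context {R : realType} {n : nat}.
Implicit Types (u v w x y z : 'rV[R]_n) (f : 'rV[R]_n -> R).

Lemma innerC u v : inner u v = inner v u.
Proof. by apply: eq_bigr => i _; rewrite mulrC. Qed.

Lemma innerBl u v w : inner (u - v) w = inner u w - inner v w.
Proof. by rewrite /inner -sumrB; apply: eq_bigr => i _; rewrite !mxE mulrBl. Qed.

Lemma innerZl (a : R) u w : inner (a *: u) w = a * inner u w.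
Proof. by rewrite /inner mulr_sumr; apply: eq_bigr => i _; rewrite !mxE mulrA. Qed.

Lemma innerBr u v w : inner u (v - w) = inner u v - inner u w.
Proof. by rewrite innerC innerBl !(innerC u). Qed.

Lemma sqnormB u w : sqnorm (u - w) = sqnorm u - 2 * inner u w + sqnorm w.
Proof. by rewrite /sqnorm innerBl !innerBr (innerC w u); lra. Qed.

Lemma sqnormBC u w : sqnorm (u - w) = sqnorm (w - u).
Proof. by rewrite !sqnormB innerC; lra. Qed.

Lemma inner_three_point x y z :
  inner (x - y) (z - y) = (sqnorm (x - y) + sqnorm (z - y) - sqnorm (x - z)) / 2.
Proof.
have -> : x - z = (x - y) - (z - y) by rewrite opprB addrA subrK.
by rewrite (sqnormB (x - y)); lra.
Qed.

Lemma convex_grad_le f df x z :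
  convex_fun f -> is_gradient f df -> f x + inner (df x) (z - x) <= f z.
Proof.
move=> cvxf gradf; have [difx dfE] := gradf x.
rewrite -dfE -deriveE // addrC -lerBrDr.
apply: convex_derive_le; last exact: diff_derivable.
by move=> t /andP[t0 t1]; apply: cvxf; rewrite !ltW.
Qed.

Lemma eps_subdiff_fin_num (g : 'rV[R]_n -> \bar R) (eps : R) x v :
  (forall y, -oo < g y)%E -> v \in eps_subdiff g eps x -> g x \is a fin_num.
Proof. by move=> gninf /set_mem[gx _]; rewrite fin_numE gt_eqF ?lt_eqF. Qed.

End EuclideanSpace.

Theorem theorem2p15 (R : realType) (n : nat)
  (f : 'rV[R]_n -> R) (df : 'rV[R]_n -> 'rV[R]_n) (L : R)
  (g : 'rV[R]_n -> \bar R)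
  (eps B rho : R) (x xt : 'rV[R]_n) :
  convex_fun f -> is_gradient f df -> lipschitz_smooth f df L ->
  proper_fun g -> closed_fun g -> convex_efun g ->
  0 <= eps -> 0 <= B -> 0 <= rho ->
  (exists v, v \in eps_subdiff g eps xt /\
     0 = df x - (B + rho) *: (x - xt) + v) ->
  bregman f df xt x <= B / 2 * sqnorm (x - xt) ->
  forall z : 'rV[R]_n,
    ((- eps)%:E <=
      ((f z)%:E + g z) - ((f xt)%:E + g xt)
      + ((B + rho) / 2 * sqnorm (x - z) - (B + rho) / 2 * sqnorm (z - xt)
         - rho / 2 * sqnorm (xt - x))%:E)%E.
Proof.
move=> cvxf gradf _ [_ gninf] _ _ _ _ _ [v [vsub hv]] linesearch z.
have v_eq : v = (B + rho) *: (x - xt) - df x.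
  by move/esym/eqP: hv; rewrite addrC addr_eq0 opprB => /eqP.
have v_inner : inner v (z - xt) =
    (B + rho) * inner (x - xt) (z - xt) - inner (df x) (z - xt).
  by rewrite v_eq [LHS]innerBl innerZl.
have three_point := inner_three_point x xt z.
have f_ge := convex_grad_le x z cvxf gradf.
have df_inner : inner (df x) (z - xt) = inner (df x) (z - x) - inner (df x) (xt - x).
  by rewrite -innerBr opprB addrA subrK.
have [_ /(_ z) g_sub] := set_mem vsub.
rewrite -(fineK (eps_subdiff_fin_num gninf vsub)) in g_sub *.
move: g_sub (gninf z); case: (g z) => [r | |] // g_sub _.
  rewrite -!EFinD !lee_fin in g_sub *.
  move: linesearch v_inner; rewrite /bregman (sqnormBC xt x) three_point; lra.
by rewrite addey // -EFinD addye // leey.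
Qed.
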